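(* Let $A\subseteq\Gamma$ be a finite set and $D\subseteq A-A$, and put $\sigma:=\sum_{s\in D}|A-A_s|$. Then there are $l\ge|D|^2/(4\sigma)$ elements $s_1,\dots,s_l\in D$ such that the sets $A_{s_1},\dots,A_{s_l}$ are pairwise disjoint. In particular, if $|A^2-\Delta(A)|\le|A-A|^2/M$ for a real $M>0$, then there are at least $M/4$ pairwise disjoint sets $A_{s_1},\dots,A_{s_l}$.
   Context: $\Gamma$ is an abelian group. $A_s=A\cap(A-s)$. $A^2-\Delta(A)=\{(a_1-a,a_2-a):a_1,a_2,a\in A\}\subseteq\Gamma^2$. *)

From HB Require Import structures.
From mathcomp Require Import all_boot all_order all_algebra.
From mathcomp Require Import finmap.
Set Implicit Arguments. Unset Strict Implicit. Unset Printing Implicit Defensive.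
Import Order.TTheory GRing.Theory Num.Theory.
Local Open Scope ring_scope.
Local Open Scope fset_scope.

Definition diffset (G : zmodType) (A B : {fset G}) : {fset G} :=
  [fset a - b | a in A, b in B].

Definition translate (G : zmodType) (A : {fset G}) (s : G) : {fset G} :=
  [fset a - s | a in A].

Definition Asub (G : zmodType) (A : {fset G}) (s : G) : {fset G} :=
  A `&` translate A s.

(* A^2 - Delta(A) = { (a1 - a, a2 - a) : a1, a2, a in A } in Gamma^2. *)
Definition sqdiag (G : zmodType) (A : {fset G}) : {fset (G * G)} :=
  [fset (p.1 - a, p.2 - a) | p in A `*` A, a in A].

From HB Require Import structures.
From mathcomp Require Import all_boot all_order all_algebra.
From mathcomp Require Import finmap zify ring lra.
Import Order.TTheory GRing.Theory Num.Theory.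
Local Open Scope ring_scope.
Local Open Scope fset_scope.
Set Implicit Arguments. Unset Strict Implicit. Unset Printing Implicit Defensive.

(* If [A_s] and [A_t] share a point [x], then [t = (x + t) - x] lies in
   [A - A_s]; in particular [s] itself lies in [A - A_s].  So in the conflict
   graph on [D] (edges between [s], [t] with [A_s], [A_t] not disjoint) the
   closed neighbourhood of [s] has at most [|A - A_s|] elements.  By Markov's
   inequality at least half of [D] has [|A - A_t| <= 2 sigma / |D|], and the
   greedy algorithm on that half yields [l] vertices pairwise without conflict
   with [|D| / 2 <= l * 2 sigma / |D|].  For the second claim take [D = A - A]
   and note that [(u, t) |-> (a, x + t)], where [u = a - x] with [x] in [A_t],
   embeds the pairs counted by [sigma] into [A^2 - Delta(A)]. *)

Section Greedy.

Variables (T : choiceType) (disj : rel T) (N : T -> {fset T}) (k : nat).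

Lemma greedy_pairwise (D : {fset T}) :
  (forall s, s \in D -> s \in N s /\ (#|` N s| <= k)%N) ->
  (forall s t, s \in D -> t \in D -> ~~ disj s t -> t \in N s) ->
  exists q : seq T, [/\ (#|` D| <= size q * k)%N, all (mem D) q & pairwise disj q].
Proof.
have [n] := ubnP #|` D|; elim: n D => // n IH D ltDn hN hC.
have [/eqP -> | /fset0Pn [s0 s0D]] := boolP (D == fset0).
  by exists [::]; rewrite cardfs0.
have [s0N s0k] := hN s0 s0D.
pose D' := D `\` N s0.
have subD' x : x \in D' -> x \in D by rewrite in_fsetD => /andP[].
have card_cut : (#|` D `&` N s0| <= k)%N.
  by apply: leq_trans s0k; apply/fsubset_leq_card/fsubsetIr.
have cut_gt0 : (0 < #|` D `&` N s0|)%N.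
  by rewrite cardfs_gt0; apply/fset0Pn; exists s0; rewrite in_fsetI s0D.
have card_split := cardfsID (N s0) D; rewrite -/D' in card_split.
have [|q [q_card q_in q_pw]] := IH D' _ (fun s sD => hN s (subD' s sD))
  (fun s t sD tD => hC s t (subD' s sD) (subD' t tD)); first lia.
have q_D' x : x \in q -> x \in D' by move=> xq; exact: (allP q_in).
exists (s0 :: q); split.
- rewrite /= mulSn; lia.
- by rewrite /= s0D; apply/allP => x /q_D'/subD'.
- rewrite /= q_pw andbT; apply/allP => x /q_D' xD'.
  apply: contraT => /(hC s0 x s0D (subD' x xD')).
  by move: xD'; rewrite in_fsetD => /andP[/negPf ->].
Qed.

End Greedy.

Lemma card_le_twice_below_threshold (T : choiceType) (D : {fset T}) (f : T -> nat) k :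
  (2 * \sum_(t <- D) f t < k.+1 * #|` D|)%N ->
  (#|` D| <= 2 * #|` [fset t in D | (f t <= k)%N]|)%N.
Proof.
move=> lt_sum; pose small t := (f t <= k)%N.
have card_split :
    #|` D| = (#|` [fset t in D | small t]| + #|` [fset t in D | ~~ small t]|)%N.
  by rewrite !card_fset_sum1 (big_fsetID _ small).
have large_sum : (#|` [fset t in D | ~~ small t]| * k.+1 <= \sum_(t <- D) f t)%N.
  rewrite (big_fsetID _ small) /= card_fset_sum1 big_distrl /=.
  apply: leq_trans (leq_addl _ _); rewrite big_seq [X in (_ <= X)%N]big_seq.
  by apply: leq_sum => t; rewrite !inE mul1n ltnNge => /andP[].
have le_twice :
    (2 * #|` [fset t in D | ~~ small t]| * k.+1 <= 2 * \sum_(t <- D) f t)%N.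
  by rewrite -mulnA leq_mul2l large_sum orbT.
have := leq_ltn_trans le_twice lt_sum.
rewrite card_split [(k.+1 * _)%N]mulnC ltn_pmul2r // /small; lia.
Qed.

Section DisjointTranslates.

Variables (G : zmodType) (A : {fset G}).

Lemma mem_diffset (B : {fset G}) x :
  reflect (exists a b, [/\ a \in A, b \in B & x = a - b]) (x \in diffset A B).
Proof.
apply: (iffP (imfset2P _ _ _ _ _)).
  by move=> [a aA [b bB ->]]; exists a, b.
by move=> [a [b [aA bB ->]]]; exists a => //; exists b.
Qed.

Lemma mem_Asub s x : (x \in Asub A s) = (x \in A) && ((x + s)%R \in A).
Proof.
rewrite in_fsetI; congr andb; apply/imfsetP/idP => [[a aA ->]|xsA].
  by rewrite subrK.
by exists (x + s)%R; rewrite ?addrK.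
Qed.

Lemma mem_diffset_Asub_self s : s \in diffset A A -> s \in diffset A (Asub A s).
Proof.
move=> /mem_diffset [a [b [aA bA ->]]]; apply/mem_diffset; exists a, b.
by rewrite mem_Asub bA subrKC.
Qed.

Lemma mem_diffset_Asub_meet s t :
  ~~ [disjoint Asub A s & Asub A t]%fset -> t \in diffset A (Asub A s).
Proof.
rewrite -fsetI_eq0 => /fset0Pn [x]; rewrite in_fsetI => /andP[xs].
rewrite mem_Asub => /andP[_ xtA]; apply/mem_diffset; exists (x + t)%R, x.
by split=> //; rewrite [(x + t)%R]addrC addrK.
Qed.

Lemma disjoint_Asub_seq (D : {fset G}) :
  D `<=` diffset A A ->
  exists q : seq G,
    [/\ (#|` D| ^ 2 <= 4 * size q * \sum_(t <- D) #|` diffset A (Asub A t)|)%N,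
        all (mem D) q & pairwise (fun s t => [disjoint Asub A s & Asub A t]) q].
Proof.
move=> DA; pose f t := #|` diffset A (Asub A t)|.
pose sigma := (\sum_(t <- D) f t)%N; pose n := #|` D|.
have [n0|n_gt0] := posnP n; first by exists [::]; rewrite -/n n0.
pose k := (2 * sigma %/ n)%N; pose D' := [fset t in D | (f t <= k)%N].
have kn_le : (k * n <= 2 * sigma)%N by exact: leq_divM.
have n_le : (n <= 2 * #|` D'|)%N by apply: card_le_twice_below_threshold; exact: ltn_ceil.
have [|s t|q [q_card q_in q_pw]] := @greedy_pairwise G
    (fun s t => [disjoint Asub A s & Asub A t]) (fun s => diffset A (Asub A s)) k D'.
- move=> s; rewrite !inE => /andP[sD fs_le]; split=> //.
  exact/mem_diffset_Asub_self/(fsubsetP DA).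
- by move=> _ _; exact: mem_diffset_Asub_meet.
exists q; split.
- have n_sq : (n * n <= n * (2 * (size q * k)))%N.
    by rewrite leq_mul2l (leq_trans n_le) ?orbT // leq_mul2l q_card orbT.
  have qkn_le : (2 * size q * (k * n) <= 2 * size q * (2 * sigma))%N.
    by rewrite leq_mul2l kn_le orbT.
  rewrite -/n -/sigma expnS expn1; apply: leq_trans n_sq _.
  have -> : (n * (2 * (size q * k)) = 2 * size q * (k * n))%N by ring.
  by have -> : (4 * size q * sigma = 2 * size q * (2 * sigma))%N by ring.
- by apply/allP => x /(allP q_in); rewrite !inE => /andP[].
- exact: q_pw.
Qed.

Lemma sum_card_diffset_Asub_le :
  (\sum_(t <- diffset A A) #|` diffset A (Asub A t)| <= #|` sqdiag A|)%N.
Proof.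
pose P := [fset ((u, t) : G * G) | t : G in diffset A A, u : G in diffset A (Asub A t)].
have enum_sum (X : {fset G}) (F : G -> nat) :
    (\sum_(i <- enum_finmem (mem X)) F i = \sum_(i <- X) F i)%N.
  by apply/perm_big/uniq_perm; rewrite ?enum_finmem_uniq ?fset_uniq.
have -> : (\sum_(t <- diffset A A) #|` diffset A (Asub A t)| = #|` P|)%N.
  rewrite card_fset_sum1 [X in _ = X]big_imfset2 /=; last first.
    by move=> [x1 y1] [x2 y2] _ _ /= [-> ->].
  by rewrite enum_sum; apply: eq_bigr => t _; rewrite enum_sum card_fset_sum1.
apply/fsubset_leq_card/fsubsetP => _ /imfset2P [t _ [u /mem_diffset uP ->]].
have [a [x [aA + ->]]] := uP; rewrite mem_Asub => /andP[xA xtA].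
apply/imfset2P; exists (a, (x + t)%R); first by rewrite !inE /= aA xtA.
by exists x => //=; rewrite [(x + t)%R]addrC addrK.
Qed.

Lemma disjoint_Asub_family (X : {fset G}) (q : seq G) :
  all (mem X) q -> pairwise (fun s t => [disjoint Asub A s & Asub A t]) q ->
  exists s : 'I_(size q) -> G,
    (forall i, s i \in X) /\
    (forall i j, i != j -> [disjoint Asub A (s i) & Asub A (s j)]).
Proof.
move=> q_in /(pairwiseP 0) q_pw; exists (fun i => nth 0 q i); split.
  by move=> i; apply: (allP q_in); exact: mem_nth.
move=> i j; rewrite neq_ltn => /orP[] ij; last rewrite fdisjoint_sym.
  all: by apply: q_pw; rewrite ?inE /=.
Qed.

End DisjointTranslates.

Lemma sqr_div_le_of_nat (R : realFieldType) (n l sigma : nat) :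
  (n ^ 2 <= 4 * l * sigma)%N -> n%:R ^+ 2 / (4 * sigma%:R) <= l%:R :> R.
Proof.
move=> le_nat; have [->|sigma_gt0] := posnP sigma.
  by rewrite mulr0 invr0 mulr0 ler0n.
rewrite ler_pdivrMr ?mulr_gt0 ?ltr0n //.
by move: le_nat; rewrite -(ler_nat R) natrX !natrM mulrA [_ * 4]mulrC.
Qed.

Lemma quarter_le_of_nat (R : realFieldType) (n l sigma S : nat) (M : R) :
  (0 < n)%N -> 0 < M -> (n ^ 2 <= 4 * l * sigma)%N -> (sigma <= S)%N ->
  S%:R <= n%:R ^+ 2 / M -> M / 4 <= l%:R.
Proof.
move=> n_gt0 M_gt0 n_le sigma_le; rewrite ler_pdivlMr // => S_le.
have sigma_gt0 : (0 < sigma)%N.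
  case: posnP n_le => // ->; rewrite muln0 leqn0 expn_eq0 andbT => /eqP n0.
  by rewrite n0 in n_gt0.
move: n_le sigma_le; rewrite -!(ler_nat R) natrX !natrM => n_le sigma_le.
have sigmaR : 0 < sigma%:R :> R by rewrite ltr0n.
have : sigma%:R * M <= sigma%:R * (4 * l%:R) :> R by nra.
by rewrite ler_pM2l // => ?; lra.
Qed.

Theorem proposition8 (R : realFieldType) (G : zmodType) (A D : {fset G}) :
  D `<=` diffset A A ->
  (exists (l : nat) (s : 'I_l -> G),
      (#|` D|%:R ^+ 2 / (4 * (\sum_(t <- D) #|` diffset A (Asub A t)|)%N%:R)
         <= (l%:R : R))
      /\ (forall i, s i \in D)
      /\ (forall i j, i != j -> [disjoint Asub A (s i) & Asub A (s j)]))
  /\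
  (A != fset0 -> forall M : R, 0 < M ->
     (#|` sqdiag A|%:R <= #|` diffset A A|%:R ^+ 2 / M) ->
     exists (l : nat) (s : 'I_l -> G),
       M / 4 <= l%:R
       /\ (forall i, s i \in diffset A A)
       /\ (forall i j, i != j -> [disjoint Asub A (s i) & Asub A (s j)])).
Proof.
move=> DA; split.
  have [q [q_card q_in q_pw]] := disjoint_Asub_seq DA.
  have [s [s_in s_disj]] := disjoint_Asub_family q_in q_pw.
  by exists (size q), s; split; first exact: sqr_div_le_of_nat.
move=> /fset0Pn [a aA] M M_gt0 sqdiag_le.
have [q [q_card q_in q_pw]] := disjoint_Asub_seq (fsubset_refl (diffset A A)).
have [s [s_in s_disj]] := disjoint_Asub_family q_in q_pw.
exists (size q), s; split=> //; apply: quarter_le_of_nat M_gt0 q_card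
  (sum_card_diffset_Asub_le A) sqdiag_le.
by rewrite cardfs_gt0; apply/fset0Pn; exists (a - a); apply/mem_diffset; exists a, a.
Qed.
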